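(* Let $p$ be a prime, $r \geq 1$ an integer, and let $D \in \mathbb{Z}_{p^r}^*$ be such that $D \bmod p$ is a quadratic non-residue in $\mathbb{Z}_p$. Then $(\mathcal{H}_{D,\mathbb{Z}_{p^r}}, \otimes)$ is a cyclic group of order $p^{r-1}(p+1)$; i.e., the Pell equation $x^2 - D y^2 = 1$ has exactly $p^{r-1}(p+1)$ solutions $(x,y) \in \mathbb{Z}_{p^r} \times \mathbb{Z}_{p^r}$.
   Context: For a commutative ring $R$ and $D \in R$, let $\mathcal{H}_{D,R} = \{(x,y) \in R \times R : x^2 - D y^2 = 1\}$, equipped with the product $(x,y) \otimes (w,z) = (xw + yzD,\ yw + xz)$. This is a commutative group with identity $(1,0)$ and inverse of $(x,y)$ equal to $(x,-y)$. Here $\mathbb{Z}_{m}$ denotes the ring of integers modulo $m$. *)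

From mathcomp Require Import all_boot all_order all_algebra.
Set Implicit Arguments. Unset Strict Implicit. Unset Printing Implicit Defensive.
Import GRing.Theory.
Local Open Scope ring_scope.

Definition onPell (R : comNzRingType) (D : R) (a : R * R) : bool :=
  a.1 ^+ 2 - D * a.2 ^+ 2 == 1.

Definition pell_mul (R : comNzRingType) (D : R) (a b : R * R) : R * R :=
  (a.1 * b.1 + a.2 * b.2 * D, a.2 * b.1 + a.1 * b.2).

Definition pell_pow (R : comNzRingType) (D : R) (g : R * R) (k : nat) : R * R :=
  iter k (pell_mul D g) (1, 0).

From HB Require Import structures.
From mathcomp Require Import all_boot all_order all_algebra all_fingroup all_solvable.
From mathcomp Require Import ring zify.
Set Implicit Arguments. Unset Strict Implicit. Unset Printing Implicit Defensive.
Import GRing.Theory.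
Local Open Scope ring_scope.

(* Identify (x, y) with x + y√D: the Pell conic is the group of norm-one
   elements of R[√D], which [pell_mx] realises as 2x2 matrices.
   Counting: since D is a non-residue mod p, the norm a^2 - D b^2 is a unit as
   soon as a or b is, so (a : b) |-> (a + b√D)/(a - b√D) is a bijection from the
   projective line over Z/p^r onto the conic; that line has p^r + p^(r-1)
   points, (t : 1) for all t and (1 : u) for p | u.
   Cyclicity: the group is abelian, so it suffices that its Sylow subgroups are
   cyclic. For q <> p, no element g <> 1 of the q-Sylow subgroup reduces to
   (1, 0) mod p (those have p-power order), so the matrix of g minus 1 is
   invertible, and a finite group of units with this property is cyclic. The
   p-Sylow subgroup has order p^(r-1) and contains the point with u = p, whose
   matrix is 1 + pM with M_(1,0) a unit; lifting the exponent shows that its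
   order is p^(r-1). *)

Section PellConic.
Variables (R : comNzRingType) (D : R).

Lemma onPell_mul a b : onPell D a -> onPell D b -> onPell D (pell_mul D a b).
Proof.
case: a b => [x y] [w z]; rewrite /onPell /= => /eqP Ea /eqP Eb.
have -> : (x * w + y * z * D) ^+ 2 - D * (y * w + x * z) ^+ 2
   = (x ^+ 2 - D * y ^+ 2) * (w ^+ 2 - D * z ^+ 2) by ring.
by rewrite Ea Eb mulr1.
Qed.

Lemma onPell1 : onPell D (1, 0).
Proof. by rewrite /onPell /= expr1n expr0n mulr0 subr0. Qed.

Lemma onPellN2 a : onPell D a -> onPell D (a.1, - a.2).
Proof. by rewrite /onPell /= sqrrN. Qed.

Lemma onPellE (x y : R) :
  onPell D (x, y) = (D * y ^+ 2 == (x + 1) * (x - 1)).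
Proof.
rewrite /onPell /= -subr_eq0 -[RHS]subr_eq0.
have -> : x ^+ 2 - D * y ^+ 2 - 1 = - (D * y ^+ 2 - (x + 1) * (x - 1)) by ring.
by rewrite oppr_eq0.
Qed.

End PellConic.

Section PellGroup.
Variables (R : finComNzRingType) (D : R).

Definition pell_group := {a : R * R | onPell D a}.

Definition pell_gmul (a b : pell_group) : pell_group :=
  Sub _ (onPell_mul (valP a) (valP b)).
Definition pell_gone : pell_group := Sub _ (onPell1 D).
Definition pell_ginv (a : pell_group) : pell_group := Sub _ (onPellN2 (valP a)).

Lemma pell_gmulA : associative pell_gmul.
Proof.
move=> [[x y] ?] [[w z] ?] [[u v] ?]; apply: val_inj.
by rewrite /= /pell_mul /=; congr pair; ring.
Qed.

Lemma pell_gmul1 : left_id pell_gone pell_gmul.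
Proof.
move=> [[x y] ?]; apply: val_inj.
by rewrite /= /pell_mul /=; congr pair; ring.
Qed.

Lemma pell_gmulV : left_inverse pell_gone pell_ginv pell_gmul.
Proof.
move=> [[x y] Exy]; apply: val_inj; rewrite /= /pell_mul /=.
congr pair; last by ring.
by rewrite -(eqP Exy) /=; ring.
Qed.

End PellGroup.

HB.instance Definition _ (R : finComNzRingType) (D : R) := Finite.on (pell_group D).
HB.instance Definition _ (R : finComNzRingType) (D : R) :=
  Finite_isGroup.Build (pell_group D) (@pell_gmulA R D) (@pell_gmul1 R D) (@pell_gmulV R D).

Section PellMatrix.
Variables (R : comNzRingType) (D : R).

(* Multiplication by a.1 + a.2 √D on R[√D], in the basis (1, √D). *)
Definition pell_mx (a : R * R) : 'M[R]_2 :=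
  \matrix_(i < 2, j < 2) if i == j then a.1 else if i == 0 then D * a.2 else a.2.

Lemma pell_mx_mul a b : pell_mx (pell_mul D a b) = pell_mx a *m pell_mx b.
Proof.
apply/matrixP => i j; rewrite !mxE !big_ord_recl big_ord0 !mxE /=.
by case: a b => [x y] [w z]; case: i => [[|[|//]] ?]; case: j => [[|[|//]] ?] /=; ring.
Qed.

Lemma pell_mx1 : pell_mx (1, 0) = 1.
Proof.
apply/matrixP => i j; rewrite !mxE /=.
by case: i => [[|[|//]] ?]; case: j => [[|[|//]] ?] /=; rewrite ?mulr0.
Qed.

Lemma pell_mxX a k : pell_mx (pell_pow D a k) = pell_mx a ^+ k.
Proof.
elim: k => [|k IHk]; first exact: pell_mx1.
by rewrite exprS /pell_pow iterS pell_mx_mul IHk.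
Qed.

Lemma pell_mx_inj : injective pell_mx.
Proof.
move=> [x y] [w z] /matrixP E.
by move: (E 0 0) (E 1 0); rewrite !mxE /= => -> ->.
Qed.

Lemma pell_mxB1 a : pell_mx a - 1 = pell_mx (a.1 - 1, a.2).
Proof.
apply/matrixP => i j; rewrite !mxE /=.
by case: i => [[|[|//]] ?]; case: j => [[|[|//]] ?] /=; rewrite ?subr0.
Qed.

Lemma pell_mxMn a n : pell_mx (a.1 *+ n, a.2 *+ n) = pell_mx a *+ n.
Proof.
apply/matrixP => i j; rewrite mulmxnE !mxE /=.
by case: (i == j) => //; case: (_ == _); rewrite ?mulrnAr.
Qed.

End PellMatrix.

Lemma pell_mx_unit (R : comUnitRingType) (D : R) a :
  a.1 ^+ 2 - D * a.2 ^+ 2 \is a GRing.unit -> pell_mx D a \is a GRing.unit.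
Proof.
case: a => x y /=; set N := _ - _ => NU.
have conjK : pell_mul D (x / N, - y / N) (x, y) = (1, 0).
  by rewrite /pell_mul /=; congr pair; [rewrite -(mulrV NU) /N | ]; ring.
have conjK' : pell_mul D (x, y) (x / N, - y / N) = (1, 0).
  by rewrite -conjK /pell_mul /=; congr pair; ring.
apply/unitrP; exists (pell_mx D (x / N, - y / N)).
by rewrite -!mulmxE -!pell_mx_mul conjK conjK' pell_mx1.
Qed.

Section PellGroupTheory.
Variables (R : finComNzRingType) (D : R).

Lemma pell_valM (a b : pell_group D) : val (a * b)%g = pell_mul D (val a) (val b).
Proof. by []. Qed.

Lemma pell_valX (a : pell_group D) k : val (a ^+ k)%g = pell_pow D (val a) k.
Proof. by elim: k => [|k IHk] //; rewrite expgS pell_valM IHk. Qed.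

Lemma pell_abelian : abelian [set: pell_group D].
Proof.
apply/centsP => -[[x y] ?] _ [[w z] ?] _; apply: val_inj.
by rewrite /= /pell_mul /=; congr pair; ring.
Qed.

Lemma card_pell_group : #|[set: pell_group D]| = #|[set a : R * R | onPell D a]|.
Proof. by rewrite cardsT card_sig; apply: eq_card => a; rewrite inE. Qed.

Lemma pell_mx_expg (x : pell_group D) k :
  pell_mx D (val (x ^+ k)%g) = pell_mx D (val x) ^+ k.
Proof. by rewrite pell_valX pell_mxX. Qed.

Lemma pell_expg_eq1 (x : pell_group D) k :
  (x ^+ k == 1)%g = (pell_mx D (val x) ^+ k == 1).
Proof.
rewrite -pell_mx_expg -(pell_mx1 D); apply/eqP/eqP => [-> // | E].
exact/val_inj/(pell_mx_inj E).
Qed.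

End PellGroupTheory.

Section PellPoint.
Variables (R : comUnitRingType) (D : R) (a b : R).
Let N := a ^+ 2 - D * b ^+ 2.
Hypothesis NU : N \is a GRing.unit.

(* (a + b√D)/(a - b√D) = (a + b√D)^2 / (a^2 - D b^2) *)
Definition pell_point : R * R := ((a ^+ 2 + D * b ^+ 2) / N, 2%:R * a * b / N).

Lemma onPell_point : onPell D pell_point.
Proof.
apply/eqP; transitivity ((N / N) ^+ 2); first by rewrite /N /=; ring.
by rewrite mulrV // expr1n.
Qed.

Lemma pell_pointB1 : pell_point.1 - 1 = 2%:R * D * b ^+ 2 / N.
Proof.
transitivity (2%:R * D * b ^+ 2 / N + (N / N - 1)); first by rewrite /N /=; ring.
by rewrite mulrV // subrr addr0.
Qed.

Lemma pell_pointD1 : pell_point.1 + 1 = 2%:R * a ^+ 2 / N.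
Proof.
transitivity (2%:R * a ^+ 2 / N + (1 - N / N)); first by rewrite /N /=; ring.
by rewrite mulrV // subrr addr0.
Qed.

Lemma pell_pointP x y :
  pell_point = (x, y) <-> a * y = b * (x + 1) /\ a * (x - 1) = D * b * y.
Proof.
split=> [[<- <-] | [Ey Ex]].
  by rewrite pell_pointB1 pell_pointD1 /=; split; ring.
congr pair; apply: (mulIr NU); rewrite divrK //; symmetry.
- transitivity (a * (a * (x - 1)) - D * b * (b * (x + 1)) + a ^+ 2 + D * b ^+ 2).
    by rewrite /N; ring.
  by rewrite Ex -Ey; ring.
- transitivity (a * (a * y) - b * (D * b * y)); first by rewrite /N; ring.
  by rewrite Ey -Ex; ring.
Qed.

Lemma pell_point_lines :
  a * pell_point.2 = b * (pell_point.1 + 1) /\ a * (pell_point.1 - 1) = D * b * pell_point.2.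
Proof. exact/pell_pointP/surjective_pairing. Qed.

End PellPoint.

Section LiftingTheExponent.
Variables (p m : nat).
Hypotheses (p_pr : prime p) (p_gt2 : (2 < p)%N) (m_gt0 : (0 < m)%N).

Lemma dvdn_binomial_term k : (2 <= k <= p)%N -> (p ^ m.+2 %| p ^ (m * k) * 'C(p, k))%N.
Proof.
case/andP=> k_ge2; rewrite leq_eqVlt => /orP[/eqP-> | k_ltp].
  rewrite binn muln1 dvdn_exp2l //.
  have : (m * 3 <= m * p)%N by rewrite leq_mul2l p_gt2 orbT.
  lia.
rewrite expnSr dvdn_mul ?prime_dvd_bin ?dvdn_exp2l //; nia.
Qed.

Lemma lift_exponent_step (S : pzRingType) (e : S) :
  exists t : S, (1 + e *+ p ^ m) ^+ p = 1 + (e + t *+ p) *+ p ^ m.+1.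
Proof.
(* the binomial terms of index i.+2 >= 2, divided by p ^ m.+2 *)
exists (\sum_(i < p.-1) e ^+ i.+2 *+ ((p ^ (m * i.+2) * 'C(p, i.+2)) %/ p ^ m.+2)).
case: p p_pr p_gt2 dvdn_binomial_term => [|[|q]] // _ _ dvd_term.
rewrite addrC exprD1n (big_ord_recl q.+2) (big_ord_recl q.+1) /=.
rewrite expr0 bin0 mulr1n /bump /= expr1 bin1 addrA.
rewrite mulrnDl -!mulrnA -expnSr -expnS -addrA; congr (_ + (_ + _)).
rewrite -sumrMnl; apply: eq_bigr => i _; rewrite !add1n.
rewrite -mulrnA divnK; last by apply: dvd_term; have := ltn_ord i; lia.
by rewrite exprMn_n -mulrnA expnM.
Qed.

End LiftingTheExponent.

Lemma lift_exponent (S : pzRingType) (p m j : nat) (e : S) :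
  prime p -> (2 < p)%N -> (0 < m)%N ->
  exists t : S, (1 + e *+ p ^ m) ^+ (p ^ j) = 1 + (e + t *+ p) *+ p ^ (m + j).
Proof.
move=> p_pr p_gt2 m_gt0; elim: j => [|j [t Ej]].
  by exists 0; rewrite expn0 expr1 addn0 mul0rn addr0.
have mj_gt0 : (0 < m + j)%N by rewrite addn_gt0 m_gt0.
have [t' Et'] := lift_exponent_step p_pr p_gt2 mj_gt0 (e + t *+ p).
exists (t + t'); rewrite expnSr exprM Ej addnS Et'.
by rewrite [(t + t') *+ p]mulrnDl addrA.
Qed.

(* 'Z_p is not canonically a field for an abstract prime p (only 'F_p is). *)
Lemma unitZp_prime (p : nat) (x : 'Z_p) : prime p -> (x \is a GRing.unit) = (x != 0).
Proof.
move=> p_pr; have p_gt1 := prime_gt1 p_pr.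
have x_lt_p : (val x < p)%N by rewrite -[p in (_ < p)%N]Zp_cast ?ltn_ord.
rewrite -{1}[x]natr_Zp unitZpE // prime_coprime //.
by rewrite -val_eqE /= /dvdn modn_small.
Qed.

Section PrimePower.
Variables (p r : nat).
Hypotheses (p_pr : prime p) (r_gt0 : (0 < r)%N).
Local Notation R := 'Z_(p ^ r).

Let p_gt1 : (1 < p)%N. Proof. exact: prime_gt1. Qed.
Let pr_gt1 : (1 < p ^ r)%N. Proof. by rewrite -(exp1n r) ltn_exp2r. Qed.

Definition redp (a : R) : 'Z_p := (nat_of_ord a)%:R.

Lemma redp_nat n : redp n%:R = n%:R.
Proof.
rewrite /redp val_Zp_nat //; apply: val_inj.
by rewrite /= !val_Zp_nat // modn_dvdm // dvdn_exp.
Qed.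

Lemma redp_is_nmod_morphism : nmod_morphism redp.
Proof.
split=> [|a b]; first by rewrite -(natr_Zp 0) redp_nat.
by rewrite -[a]natr_Zp -[b]natr_Zp -natrD !redp_nat natrD.
Qed.

Lemma redp_is_monoid_morphism : monoid_morphism redp.
Proof.
split=> [|a b]; first by rewrite -(natr_Zp 1) redp_nat.
by rewrite -[a]natr_Zp -[b]natr_Zp -natrM !redp_nat natrM.
Qed.

HB.instance Definition _ := GRing.isNmodMorphism.Build R 'Z_p redp redp_is_nmod_morphism.
HB.instance Definition _ := GRing.isMonoidMorphism.Build R 'Z_p redp redp_is_monoid_morphism.

Lemma redp_eq0 a : (redp a == 0) = (p %| val a)%N.
Proof. by rewrite -val_eqE /= val_Zp_nat. Qed.

Lemma unitZpr a : (a \is a GRing.unit) = (redp a != 0).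
Proof.
by rewrite -[a]natr_Zp unitZpE // coprime_pexpl // prime_coprime // redp_eq0 natr_Zp.
Qed.

Lemma redp_mulrn_p a : redp (a *+ p) = 0.
Proof. by rewrite rmorphMn /= -mulr_natr pchar_Zp ?mulr0. Qed.

Lemma redp_eq0P a : reflect (exists b, a = b *+ p) (redp a == 0).
Proof.
apply: (iffP idP) => [|[b ->]]; last by rewrite redp_mulrn_p.
rewrite redp_eq0 => /divnK Ea; exists (val a %/ p)%:R.
by rewrite -mulrnA Ea natr_Zp.
Qed.

Lemma card_ker_redp : #|[set a : R | redp a == 0]| = (p ^ r.-1)%N.
Proof.
have kerE : [set a : R | redp a == 0] = ~: [set a : R | a \is a GRing.unit].
  by apply/setP => a; rewrite !inE unitZpr negbK.
have unitE : #|[set a : R | a \is a GRing.unit]| = totient (p ^ r).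
  rewrite -card_units_Zp ?expn_gt0 ?prime_gt0 // cardsT card_sub.
  by apply: eq_card => a; rewrite !inE.
rewrite kerE; have := cardsC [set a : R | a \is a GRing.unit].
rewrite unitE card_ord; move: #|~: _| => k; rewrite Zp_cast //.
rewrite totient_pfactor //; have -> : (p ^ r = p * p ^ r.-1)%N by rewrite -expnS prednK.
nia.
Qed.

Lemma natr_pexp_eq0 k : ((p ^ k)%:R == 0 :> R) = (r <= k)%N.
Proof. by rewrite -val_eqE /= val_Zp_nat // -/(dvdn _ _) dvdn_Pexp2l. Qed.

Variable D : R.
Hypothesis nonres : ~ exists x : 'Z_p, x ^+ 2 = redp D.

Lemma nonres_sqr (u v : 'Z_p) : u ^+ 2 = redp D * v ^+ 2 -> v = 0.
Proof.
move=> Euv; apply/eqP; apply: contraT; rewrite -unitZp_prime // => vU.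
by case: nonres; exists (u / v); rewrite exprMn Euv exprVn mulrK ?unitrX.
Qed.

Lemma unit_pell_norm a b :
  (a ^+ 2 - D * b ^+ 2 \is a GRing.unit) = (redp a != 0) || (redp b != 0).
Proof.
rewrite unitZpr rmorphB rmorphXn rmorphM rmorphXn /= subr_eq0 -negb_and; congr negb.
apply/eqP/andP => [Eab | [/eqP-> /eqP->]]; last by rewrite expr0n mulr0.
have rb0 := nonres_sqr Eab; split; last by rewrite rb0.
apply: contraT; rewrite -unitZp_prime // => /(unitrX 2).
by rewrite Eab rb0 expr0n mulr0 unitr0.
Qed.

Lemma nonres_p_gt2 : (2 < p)%N.
Proof.
rewrite ltn_neqAle prime_gt1 // andbT; apply/eqP => p2; apply: nonres.
exists (redp D); rewrite -[redp D]natr_Zp.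
have : (nat_of_ord (redp D) < 2)%N by rewrite p2 -[p in (_ < p)%N]Zp_cast.
move: (nat_of_ord (redp D)) => [|[|//]] _.
- by rewrite expr0n.
- by rewrite expr1n.
Qed.

Lemma unitD : D \is a GRing.unit.
Proof.
by rewrite unitZpr; apply: contra_not_neq nonres => rD0; exists 0; rewrite rD0 expr0n.
Qed.

Lemma unit2 : (2%:R : R) \is a GRing.unit.
Proof.
rewrite unitZpr redp_nat -unitZp_prime // unitZpE // prime_coprime // dvdn_prime2 //.
by rewrite neq_ltn nonres_p_gt2 orbT.
Qed.

Lemma unit_pell_norm_t1 t : t ^+ 2 - D * 1 ^+ 2 \is a GRing.unit.
Proof. by rewrite unit_pell_norm rmorph1 oner_neq0 orbT. Qed.

Lemma unit_pell_norm_1u u : 1 ^+ 2 - D * u ^+ 2 \is a GRing.unit.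
Proof. by rewrite unit_pell_norm rmorph1 oner_neq0. Qed.

Lemma unit_pell_point_t1B1 t : (pell_point D t 1).1 - 1 \is a GRing.unit.
Proof.
rewrite pell_pointB1 ?unit_pell_norm_t1 // !unitrM unitrV unit_pell_norm_t1.
by rewrite unit2 unitD ?expr1n ?unitr1.
Qed.

Lemma pell_x1unit_imset :
  [set a : R * R | onPell D a] :&: [set a | (a.1 - 1) \is a GRing.unit] =
  [set pell_point D t 1 | t : R].
Proof.
apply/setP => a; rewrite !inE; apply/andP/imsetP => [[onA x1U] | [t _ ->]].
  exists (D * a.2 / (a.1 - 1)) => //; case: a onA x1U => x y.
  rewrite onPellE /= => /eqP Dy2 x1U; symmetry; apply/pell_pointP.
    exact: unit_pell_norm_t1.
  rewrite divrK // mulr1 mul1r; split=> //.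
  by apply: (mulIr x1U); rewrite mulrAC divrK // -mulrA -expr2 Dy2.
split; last exact: unit_pell_point_t1B1.
exact/onPell_point/unit_pell_norm_t1.
Qed.

Lemma pell_point_t1_inj : injective (fun t => pell_point D t 1).
Proof.
move=> t t' /= Ett'; apply: (mulIr (unit_pell_point_t1B1 t)).
have [_ ->] := pell_point_lines (unit_pell_norm_t1 t).
by rewrite Ett'; have [_ ->] := pell_point_lines (unit_pell_norm_t1 t').
Qed.

Lemma nonunit_pell_point_1uB1 u :
  redp u = 0 -> (pell_point D 1 u).1 - 1 \isn't a GRing.unit.
Proof.
move=> ru; rewrite pell_pointB1 ?unit_pell_norm_1u // !unitrM.
by rewrite (unitZpr u) ru eqxx !andbF.
Qed.

Lemma unit_pell_point_1uD1 u : (pell_point D 1 u).1 + 1 \is a GRing.unit.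
Proof.
rewrite pell_pointD1 ?unit_pell_norm_1u // !unitrM unitrV unit_pell_norm_1u.
by rewrite unit2 ?expr1n ?unitr1.
Qed.

Lemma pell_x1nonunit_imset :
  [set a : R * R | onPell D a] :\: [set a | (a.1 - 1) \is a GRing.unit] =
  [set pell_point D 1 u | u in [set u : R | redp u == 0]].
Proof.
apply/setP => a; rewrite !inE; apply/andP/imsetP => [[x1nU onA] | [u]]; last first.
  rewrite inE => /eqP ru ->; split; first exact: nonunit_pell_point_1uB1.
  exact/onPell_point/unit_pell_norm_1u.
case: a onA x1nU => x y; rewrite onPellE /= => /eqP Dy2 x1nU.
have rx1 : redp (x - 1) = 0 by move: x1nU; rewrite unitZpr negbK => /eqP.
have x1U : x + 1 \is a GRing.unit.
  rewrite unitZpr (_ : x + 1 = x - 1 + 2%:R); last by ring.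
  by rewrite rmorphD /= rx1 add0r -unitZpr unit2.
have ry : redp y = 0.
  have : D * y ^+ 2 \isn't a GRing.unit by rewrite Dy2 unitrM (negbTE x1nU) andbF.
  by rewrite unitrM unitD unitrX_pos // unitZpr negbK => /eqP.
exists (y / (x + 1)); first by rewrite inE rmorphM /= ry mul0r.
symmetry; apply/pell_pointP; first exact: unit_pell_norm_1u.
rewrite divrK // !mul1r; split=> //; apply: (mulIr x1U).
by rewrite mulrAC -[D * _ * _]mulrA divrK // -mulrA -expr2 Dy2 mulrC.
Qed.

Lemma pell_point_1u_inj :
  {in [set u : R | redp u == 0] &, injective (fun u => pell_point D 1 u)}.
Proof.
move=> u u' _ _ /= Euu'; apply: (mulIr (unit_pell_point_1uD1 u)).
have [<- _] := pell_point_lines (unit_pell_norm_1u u).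
by rewrite Euu'; have [-> _] := pell_point_lines (unit_pell_norm_1u u').
Qed.

Lemma card_pell : #|[set a : R * R | onPell D a]| = (p ^ r.-1 * (p + 1))%N.
Proof.
rewrite -(cardsID [set a : R * R | (a.1 - 1) \is a GRing.unit]).
rewrite pell_x1unit_imset pell_x1nonunit_imset card_imset; last exact: pell_point_t1_inj.
rewrite card_in_imset; last exact: pell_point_1u_inj.
rewrite card_ker_redp card_ord Zp_cast // -[in (p ^ r)%N](prednK r_gt0) expnS.
by rewrite mulnDr muln1 mulnC.
Qed.

Lemma pell_ker_expg (x : pell_group D) :
  redp ((val x).1 - 1) == 0 -> redp (val x).2 == 0 -> (x ^+ (p ^ r.-1) = 1)%g.
Proof.
move=> /redp_eq0P[s Es] /redp_eq0P[t Et]; apply/eqP; rewrite pell_expg_eq1.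
have -> : pell_mx D (val x) = 1 + pell_mx D (s, t) *+ p ^ 1.
  by rewrite expn1 -pell_mxMn /= -Es -Et -pell_mxB1 addrC subrK.
have [T ->] := lift_exponent r.-1 (pell_mx D (s, t)) p_pr nonres_p_gt2 (ltn0Sn 0).
by rewrite add1n prednK // -scaler_nat pchar_Zp // scale0r addr0.
Qed.

Lemma pell_mx_subr1_unit (x : pell_group D) :
  (redp ((val x).1 - 1) != 0) || (redp (val x).2 != 0) ->
  pell_mx D (val x) - 1 \is a GRing.unit.
Proof.
rewrite pell_mxB1 -unit_pell_norm => normU.
exact: (@pell_mx_unit _ D ((val x).1 - 1, (val x).2) normU).
Qed.

Definition pell_gen : pell_group D :=
  Sub (pell_point D 1 p%:R) (onPell_point (unit_pell_norm_1u _)).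

Let N := 1 ^+ 2 - D * p%:R ^+ 2.
Let c1 := 2%:R * D * p%:R / N.
Let c2 := 2%:R / N.

Lemma pell_genE : (val pell_gen).1 - 1 = c1 *+ p /\ (val pell_gen).2 = c2 *+ p.
Proof.
rewrite SubK pell_pointB1; last exact: unit_pell_norm_1u.
split; first by rewrite -[c1 *+ p]mulr_natr /c1 /N; ring.
by rewrite -[c2 *+ p]mulr_natr /c2 /N /pell_point /=; ring.
Qed.

Lemma pell_gen_mx : pell_mx D (val pell_gen) = 1 + pell_mx D (c1, c2) *+ p ^ 1.
Proof.
rewrite expn1 -pell_mxMn /=; have [<- <-] := pell_genE.
by rewrite -pell_mxB1 addrC subrK.
Qed.

Lemma pell_gen_expg_neq1 : (1 < r)%N -> (pell_gen ^+ (p ^ r.-2) != 1)%g.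
Proof.
move=> r_gt1; rewrite pell_expg_eq1 pell_gen_mx.
have [T ->] := lift_exponent r.-2 (pell_mx D (c1, c2)) p_pr nonres_p_gt2 (ltn0Sn 0).
set u := c2 + T 1 0 *+ p.
have uU : u \is a GRing.unit.
  rewrite unitZpr rmorphD /= redp_mulrn_p addr0 -unitZpr.
  by rewrite unitrM unit2 unitrV unit_pell_norm_1u.
(* the (1, 0) entry would be the unit u times p ^ r.-1 *)
apply/negP; rewrite -subr_eq0 addrAC subrr add0r => /eqP/matrixP/(_ 1 0).
rewrite !(mulmxnE, mxE) /= -/u -mulr_natr -(mulr0 u) => Eu.
by have /eqP := mulrI uU Eu; rewrite natr_pexp_eq0; lia.
Qed.

Lemma order_pell_gen : #[pell_gen]%g = (p ^ r.-1)%N.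
Proof.
have gen_ker : (pell_gen ^+ (p ^ r.-1) = 1)%g.
  have [E1 E2] := pell_genE.
  by apply: pell_ker_expg; apply/redp_eq0P; [exists c1; exact: E1 | exists c2; exact: E2].
have /(dvdn_pfactor _ _ p_pr)[k k_le ord_gen] : (#[pell_gen]%g %| p ^ r.-1)%N.
  by rewrite order_dvdn gen_ker.
rewrite ord_gen; congr expn; apply/eqP; rewrite eqn_leq k_le /=.
apply: contraT; rewrite -ltnNge => k_lt.
have r_gt1 : (1 < r)%N by lia.
case/negP: (pell_gen_expg_neq1 r_gt1).
by rewrite -order_dvdn ord_gen dvdn_Pexp2l //; lia.
Qed.

Lemma pell_pSylow_cyclic (V : {group pell_group D}) :
  (p.-Sylow([set: pell_group D]) V)%g -> cyclic V.
Proof.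
move=> pSylV.
have cardV : #|V| = (p ^ r.-1)%N.
  have pexp_gt0 : (0 < p ^ r.-1)%N by rewrite expn_gt0 prime_gt0.
  rewrite (card_Hall pSylV) card_pell_group card_pell p_part lognM ?addn1 //.
  by rewrite pfactorK // logn_coprime ?addn0 ?coprimenS.
have nVG : (V <| [set: pell_group D])%g.
  by rewrite -sub_abelian_normal ?subsetT ?pell_abelian.
have gen_in_V : pell_gen \in V.
  by rewrite (mem_normal_Hall pSylV nVG (in_setT _)) /p_elt order_pell_gen pnatX pnat_id.
apply/cyclicP; exists pell_gen; apply/eqP; rewrite eq_sym eqEcard cycle_subG gen_in_V.
by rewrite -orderE order_pell_gen cardV leqnn.
Qed.

Lemma pell_qSylow_cyclic q (V : {group pell_group D}) :
  prime q -> q != p -> (q.-Sylow([set: pell_group D]) V)%g -> cyclic V.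
Proof.
move=> q_pr q_neq_p qSylV.
have coprime_pV : coprime (p ^ r.-1) #|V|.
  rewrite (card_pgroup (pHall_pgroup qSylV)) coprimeXl // coprimeXr //.
  by rewrite prime_coprime // dvdn_prime2 // eq_sym.
apply: (@div_ring_mul_group_cyclic _ _ _ (fun x : pell_group D => pell_mx D (val x))).
- exact: pell_mx1.
- by move=> x y _ _; rewrite pell_valM pell_mx_mul.
- move=> x /setD1P[x_neq1 xV]; apply: pell_mx_subr1_unit.
  rewrite -negb_and; apply: contra x_neq1 => /andP[rx1 rx2].
  have x_pexp : (#[x]%g %| p ^ r.-1)%N by rewrite order_dvdn pell_ker_expg.
  move: coprime_pV; rewrite -order_eq1 -dvdn1 => /eqP <-.
  by rewrite dvdn_gcd x_pexp order_dvdG.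
- exact: abelianS (subsetT V) (pell_abelian D).
Qed.

Lemma pell_cyclic : cyclic [set: pell_group D].
Proof.
apply: nil_Zgroup_cyclic; last exact/abelian_nil/pell_abelian.
apply/forall_inP => V /SylowP[q q_pr qSylV].
case: (eqVneq q p) qSylV => [-> | q_neq_p]; first exact: pell_pSylow_cyclic.
exact: pell_qSylow_cyclic.
Qed.
End PrimePower.

Theorem theorem1 (p r : nat) (D : 'Z_(p ^ r)) :
  prime p -> (0 < r)%N ->
  D \is a GRing.unit ->
  ~ (exists x : 'Z_p, x ^+ 2 = (nat_of_ord D)%:R) ->
  #|[set a : 'Z_(p ^ r) * 'Z_(p ^ r) | onPell D a]| = (p ^ r.-1 * (p + 1))%N /\
  exists g : 'Z_(p ^ r) * 'Z_(p ^ r),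
    onPell D g /\ forall h, onPell D h -> exists k : nat, h = pell_pow D g k.
Proof.
(* The unit hypothesis on D is implied by the non-residue one ([unitD]). *)
move=> p_pr r_gt0 _ nonres; split; first exact: card_pell.
have /cyclicP[g gen_g] := pell_cyclic p_pr r_gt0 nonres.
exists (val g); split=> [|h onh]; first exact: valP.
have : (Sub h onh : pell_group D) \in <[g]>%g by rewrite -gen_g inE.
by case/cycleP => k Ek; exists k; rewrite -pell_valX -Ek SubK.
Qed.
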